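(* Let $L$ be a Lie conformal superalgebra with $Z_L(L')=0$, where $L'$ is the derived subalgebra of $L$, and let $A$ be an associative commutative algebra with unity. If every linear super-commuting map on $L$ belongs to $\mathrm{Cent}(L)$, then every linear super-commuting map on the current Lie conformal superalgebra $L\otimes A$ belongs to $\mathrm{Cent}(L\otimes A)$.
   Context: A Lie conformal superalgebra is a $\mathbb{Z}_2$-graded $\mathbb{C}[\partial]$-module with a $\mathbb{C}$-linear $\lambda$-bracket into $\mathbb{C}[\lambda]\otimes L$ satisfying $[\partial x_\lambda y]=-\lambda[x_\lambda y]$, $[x_\lambda\partial y]=(\partial+\lambda)[x_\lambda y]$, $[x_\lambda y]=-(-1)^{|x||y|}[y_{-\lambda-\partial}x]$, $[x_\lambda[y_\mu z]]=[[x_\lambda y]_{\lambda+\mu}z]+(-1)^{|x||y|}[y_\mu[x_\lambda z]]$. The derived subalgebra $L'$ is the span of all coefficients of brackets $[x_\lambda y]$, $x,y\in L$. For $S\subseteq L$, the centralizer is $Z_L(S)=\{x\in L:[x_\lambda y]=0\ \forall y\in S\}$. The current Lie conformal superalgebra $L\otimes A$ has grading $|x\otimes a|=|x|$, $\partial(x\otimes a)=\partial x\otimes a$, and bracket $[(x\otimes a)_\lambda(y\otimes b)]=[x_\lambda y]\otimes ab$. A super-commuting map on a Lie conformal superalgebra $\mathcal L$ is a map $\Psi_\lambda:\mathcal L\to\mathbb{C}[\lambda]\otimes\mathcal L$, homogeneous of degree $|\Psi|$, with $[\Psi_\lambda(u)_{\lambda+\mu}u]=0$ for all $u\in\mathcal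 L$. The centroid $\mathrm{Cent}(\mathcal L)$ consists of linear maps $\alpha_\lambda:\mathcal L\to\mathbb{C}[\lambda]\otimes\mathcal L$ of degree $|\alpha|$ with $\alpha_\lambda([x_\mu y])=(-1)^{|x||\alpha|}[x_\mu\alpha_\lambda(y)]=[\alpha_\lambda(x)_\mu y]$ for all homogeneous $x,y$. *)

(* Elements of C[lambda] (x) L are represented by
   their coefficient sequences (seq L, coefficient of lambda^k = nth 0 s k);
   elements of C[lambda,mu] (x) L are compared coefficientwise. *)
From HB Require Import structures.
From mathcomp Require Import all_boot all_algebra.
From mathcomp Require Import complex reals.

Set Implicit Arguments.
Unset Strict Implicit.
Unset Printing Implicit Defensive.

Import GRing.Theory.
Local Open Scope ring_scope.

Section LCSA.

Variable C : comPzRingType.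

Definition coef (L : lmodType C) (s : seq L) (k : nat) : L := nth 0 s k.

Definition sgn (b : bool) : C := if b then -1 else 1.

(* Given F a b = coefficient of lambda^a nu^b of an element of
   C[lambda,nu] (x) L, this is the coefficient of lambda^i mu^j after the
   substitution nu := lambda + mu. *)
Definition subst_sum (L : lmodType C) (F : nat -> nat -> L) (i j : nat) : L :=
  \sum_(t < i.+1) F (i - t)%N (j + t)%N *+ 'C(j + t, t).

Record lcsa_data (L : lmodType C) := LcsaData {
  par : bool -> L -> L;          (* projection onto L_0 (false) / L_1 (true) *)
  der : L -> L;                  (* the action of d (partial) *)
  br  : L -> L -> seq L          (* [x_lambda y], coefficients in lambda *)
}.

Variable L : lmodType C.
Variable S : lcsa_data L.

Definition lin (U V : lmodType C) (f : U -> V) :=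
  forall (c : C) (u v : U), f (c *: u + v) = c *: f u + f v.

Definition homog (b : bool) (x : L) := par S b x = x.

Definition is_lcsa : Prop :=
  (forall b, lin (par S b)) /\
  (forall b x, par S b (par S b x) = par S b x) /\
  (forall b x, par S b (par S (~~ b) x) = 0) /\
  (forall x, par S false x + par S true x = x) /\
  lin (der S) /\
  (forall b x, der S (par S b x) = par S b (der S x)) /\
  (forall (c : C) x y z k,
      coef (br S (c *: x + y) z) k = c *: coef (br S x z) k + coef (br S y z) k) /\
  (forall (c : C) x y z k,
      coef (br S x (c *: y + z)) k = c *: coef (br S x y) k + coef (br S x z) k) /\
  (* the bracket is even: [L_a lambda L_b] in C[lambda] (x) L_(a+b) *)
  (forall a b x y k, homog a x -> homog b y ->
      homog (a (+) b) (coef (br S x y) k)) /\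
  (* [d x_lambda y] = - lambda [x_lambda y] *)
  (forall x y k, coef (br S (der S x) y) k =
      - (if k is k'.+1 then coef (br S x y) k' else 0)) /\
  (* [x_lambda d y] = (d + lambda) [x_lambda y] *)
  (forall x y k, coef (br S x (der S y)) k =
      der S (coef (br S x y) k) + (if k is k'.+1 then coef (br S x y) k' else 0)) /\
  (* skew-symmetry: [x_lambda y] = -(-1)^{|x||y|} [y_{-lambda-d} x] *)
  (forall a b x y k, homog a x -> homog b y ->
      coef (br S x y) k =
      - (sgn (a && b) *:
          \sum_(j < size (br S y x))
             ((-1) ^+ j *+ 'C(j, k)) *: iter (j - k) (der S) (coef (br S y x) j))) /\
  (* Jacobi identity:
     [x_lambda [y_mu z]] = [[x_lambda y]_{lambda+mu} z]
                           + (-1)^{|x||y|} [y_mu [x_lambda z]],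
     compared coefficient of lambda^i mu^j *)
  (forall a b x y z i j, homog a x -> homog b y ->
      coef (br S x (coef (br S y z) j)) i =
      subst_sum (fun p q => coef (br S (coef (br S x y) p) z) q) i j
      + sgn (a && b) *: coef (br S y (coef (br S x z) i)) j).

Definition derived (x : L) : Prop :=
  exists s : seq (C * (L * (L * nat))),
    x = \sum_(p <- s) p.1 *: coef (br S p.2.1 p.2.2.1) p.2.2.2.

Definition centralizer (P : L -> Prop) (x : L) : Prop :=
  forall y, P y -> forall k, coef (br S x y) k = 0.

Definition trivial_centralizer_of_derived : Prop :=
  forall x, centralizer derived x -> x = 0.

(* maps Psi_lambda : L -> C[lambda] (x) L *)
Definition lin_map (Psi : L -> seq L) : Prop :=
  forall (c : C) u v k, coef (Psi (c *: u + v)) k = c *: coef (Psi u) k + coef (Psi v) k.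

Definition has_degree (d : bool) (Psi : L -> seq L) : Prop :=
  forall b x k, homog b x -> homog (b (+) d) (coef (Psi x) k).

(* [Psi_lambda(u)_{lambda+mu} u] = 0 for all u, coefficientwise in lambda, mu *)
Definition super_commuting (Psi : L -> seq L) : Prop :=
  forall u i j,
    subst_sum (fun p q => coef (br S (coef (Psi u) p) u) q) i j = 0.

(* alpha is in the centroid Cent(L), with degree d:
   alpha_lambda([x_mu y]) = (-1)^{|x||alpha|} [x_mu alpha_lambda(y)]
                          = [alpha_lambda(x)_mu y],
   compared coefficient of lambda^i mu^j *)
Definition centroid_identities (d : bool) (alpha : L -> seq L) : Prop :=
  forall a b x y i j, homog a x -> homog b y ->
    coef (alpha (coef (br S x y) j)) i =
      sgn (a && d) *: coef (br S x (coef (alpha y) i)) j /\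
    coef (alpha (coef (br S x y) j)) i =
      coef (br S (coef (alpha x) i) y) j.

Definition in_centroid (d : bool) (alpha : L -> seq L) : Prop :=
  lin_map alpha /\ has_degree d alpha /\ centroid_identities d alpha.

End LCSA.

Section Current.

Variable C : comPzRingType.

(* A is an associative commutative C-algebra with unity, given as a
   commutative ring A with its structure map iota : C -> A
   (scalar action c . a := iota c * a). *)
Variables (L : lmodType C) (S : lcsa_data L).
Variables (A : comPzRingType) (iota : {rmorphism C -> A}).
Variables (M : lmodType C) (SM : lcsa_data M).

Definition bilin (W : lmodType C) (f : L -> A -> W) : Prop :=
  (forall (c : C) x y a, f (c *: x + y) a = c *: f x a + f y a) /\
  (forall (c : C) x a b, f x (iota c * a + b) = c *: f x a + f x b).

(* (M, t) is the tensor product L (x)_C A : t is bilinear and universal *)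
Definition is_tensor_product (t : L -> A -> M) : Prop :=
  bilin t /\
  forall (W : lmodType C) (f : L -> A -> W), bilin f ->
    exists g : M -> W, lin g /\ (forall x a, g (t x a) = f x a) /\
      forall h : M -> W, lin h -> (forall x a, h (t x a) = f x a) -> forall m, h m = g m.

Definition is_current (t : L -> A -> M) : Prop :=
  is_tensor_product t /\
  is_lcsa SM /\
  (forall b x a, par SM b (t x a) = t (par S b x) a) /\
  (forall x a, der SM (t x a) = t (der S x) a) /\
  (forall x y a b k, coef (br SM (t x a) (t y b)) k = t (coef (br S x y) k) (a * b)).

End Current.

From HB Require Import structures.
From mathcomp Require Import all_boot all_algebra.
From mathcomp Require Import complex reals.
From mathcomp Require Import boolp classical_sets.

Set Implicit Arguments.
Unset Strict Implicit.
Unset Printing Implicit Defensive.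

Import GRing.Theory.
Local Open Scope ring_scope.

(* The proof works with the contractions g = id (x) phi : L (x) A -> L, for
   phi : A -> K a linear functional.
   - Linear algebra: a vector outside a subspace is detected by a functional
     vanishing on the subspace (Zorn's lemma).  Hence L (x) A is spanned by
     pure tensors, and the contractions separate its points.
   - Multiplications mul_by a = id (x) (. a) commute with brackets, and
     contractions intertwine brackets of L (x) A with brackets against L (x) 1.
     Since Z_L(L) = 0, an element centralizing L (x) 1 is zero.
   - For a super-commuting Psi on L (x) A, polarization gives
     [Psi(m) n] = -[Psi(n) m]; with the previous point this yields
     Psi(x (x) a) = mul_by a (Psi(x (x) 1)).
   - For each contraction g, x |-> g (Psi (x (x) 1)) is super-commuting on L,
     hence in Cent(L); separating by contractions, the centroid identities hold
     for Psi on L (x) 1, then on all pure tensors, then on L (x) A by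
     bilinearity.  The theorem is the case K = C of this argument. *)

Section SeparatingFunctional.

(* A vector space over the field K, given by its additive group V and a scalar
   action sc; A is used this way with sc c a = iota c * a. *)
Variables (K : fieldType) (V : zmodType) (sc : K -> V -> V).
Hypothesis scDr : forall c x y, sc c (x + y) = sc c x + sc c y.
Hypothesis scDl : forall c e x, sc (c + e) x = sc c x + sc e x.
Hypothesis scA : forall c e x, sc c (sc e x) = sc (c * e) x.
Hypothesis sc1 : forall x, sc 1 x = x.

Local Open Scope classical_set_scope.

Definition subspace (X : set V) := X 0 /\ forall c x y, X x -> X y -> X (sc c x + y).

Definition functional (phi : V -> K) :=
  forall c x y, phi (sc c x + y) = c * phi x + phi y.

Lemma sc0 x : sc 0 x = 0.
Proof. by apply: (@addrI _ (sc 0 x)); rewrite addr0 -scDl addr0. Qed.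

Lemma scN1 x : sc (-1) x = - x.
Proof. by apply: (@addrI _ x); rewrite subrr -{1}(sc1 x) -scDl subrr sc0. Qed.

Lemma scr0 c : sc c 0 = 0.
Proof. by apply: (@addrI _ (sc c 0)); rewrite addr0 -scDr addr0. Qed.

Lemma subspaceZ X c x : subspace X -> X x -> X (sc c x).
Proof. by move=> [X0 XC] Xx; rewrite -[sc c x]addr0; apply: XC. Qed.

Lemma subspaceN X x : subspace X -> X x -> X (- x).
Proof. by move=> XS Xx; rewrite -scN1; apply: subspaceZ. Qed.

Lemma subspaceD X x y : subspace X -> X x -> X y -> X (x + y).
Proof. by move=> [_ XC] Xx Xy; rewrite -[x]sc1; apply: XC. Qed.

Variables (P : set V) (a : V).
Hypotheses (subspaceP : subspace P) (Pa : ~ P a).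

(* The subspaces containing P and avoiding a, together with the empty set so
   that the union of the empty chain is admissible. *)
Definition avoiding (X : set V) := X = set0 \/ [/\ subspace X, P `<=` X & ~ X a].

Lemma maximal_avoiding : exists W, [/\ subspace W, P `<=` W, ~ W a &
  forall B, W `<` B -> ~ avoiding B].
Proof.
have avoidingP X x : avoiding X -> X x -> [/\ subspace X, P `<=` X & ~ X a].
  by case=> // ->.
have [W [avW Wmax]] : exists W, avoiding W /\ forall B, W `<` B -> ~ avoiding B.
  apply: Zorn_bigcup => F Fav Ftot.
  have [[X0 FX0 [x0 X0x0]]|Fempty] := pselect (exists2 X, F X & exists x, X x).
    have [[X00 _] PX0 _] := avoidingP _ _ (Fav _ FX0) X0x0.
    right; split; [split|..].
    - by exists X0.
    - move=> c x y [X1 FX1 X1x] [X2 FX2 X2y].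
      have [S12|S21] := Ftot _ _ FX1 FX2.
      + have [[_ cl] _ _] := avoidingP _ _ (Fav _ FX2) X2y.
        by exists X2 => //; apply: cl => //; apply: S12.
      + have [[_ cl] _ _] := avoidingP _ _ (Fav _ FX1) X1x.
        by exists X1 => //; apply: cl => //; apply: S21.
    - by move=> x Px; exists X0 => //; apply: PX0.
    - by move=> [X FX Xa]; have [_ _] := avoidingP _ _ (Fav _ FX) Xa; apply.
  left; apply/seteqP; split => // x [X FX Xx].
  by exfalso; apply: Fempty; exists X => //; exists x.
case: avW => [W0|[WS PW Wa]]; last by exists W.
exfalso; apply: (Wmax P); last by right; split.
rewrite W0; split => // /(_ 0 subspaceP.1) //.
Qed.

Section MaximalSubspace.

Variable W : set V.
Hypotheses (WS : subspace W) (PW : P `<=` W) (Wa : ~ W a).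
Hypothesis Wmax : forall B, W `<` B -> ~ avoiding B.

Lemma line_coef_unique c1 c2 w1 w2 :
  W w1 -> W w2 -> sc c1 a + w1 = sc c2 a + w2 -> c1 = c2.
Proof.
move=> W1 W2 E; apply/eqP/negP => /negP c12; apply: Wa.
have -> : a = sc ((c1 - c2)^-1) (sc (c1 - c2) a) by rewrite scA mulVf ?subr_eq0 // sc1.
have -> : sc (c1 - c2) a = w2 - w1.
  rewrite scDl -mulN1r -scA scN1; apply: (@addIr _ w1).
  by rewrite addrNK addrAC E addrAC subrr add0r.
by apply: subspaceZ => //; apply: subspaceD => //; apply: subspaceN.
Qed.

(* By maximality, W + K a is the whole space. *)
Lemma line_decomposition v : exists c w, W w /\ v = sc c a + w.
Proof.
apply: contrapT => nodec.
pose W' u := exists c w, W w /\ u = sc c v + w.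
apply: (Wmax (B := W')); last first.
  right; split.
  - split; first by exists 0, 0; rewrite sc0 addr0; split => //; apply: WS.1.
    move=> e x y [c1 [w1 [W1 ->]]] [c2 [w2 [W2 ->]]].
    exists (e * c1 + c2), (sc e w1 + w2); split; first exact: WS.2.
    by rewrite scDr scA scDl addrACA.
  - by move=> x Px; exists 0, x; rewrite sc0 add0r; split => //; apply: PW.
  - move=> [c [w [Ww Ea]]]; have [c0|cn0] := eqVneq c 0.
      by apply: Wa; rewrite Ea c0 sc0 add0r.
    apply: nodec; exists c^-1, (sc c^-1 (- w)); split.
      by apply: subspaceZ => //; apply: subspaceN.
    by rewrite Ea scDr scA mulVf // sc1 -addrA -scDr subrr scr0 addr0.
split; first by move=> x Wx; exists 0, x; rewrite sc0 add0r.
move=> /(_ v) W'v; apply: nodec; exists 0, v; rewrite sc0 add0r; split => //.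
by apply: W'v; exists 1, 0; rewrite sc1 addr0; split => //; apply: WS.1.
Qed.

(* The functional reading off the coefficient of a in V = W (+) K a. *)
Lemma maximal_functional :
  exists phi, [/\ functional phi, forall x, W x -> phi x = 0 & phi a = 1].
Proof.
pose phi v := projT1 (cid (line_decomposition v)).
have phiP v : exists w, W w /\ v = sc (phi v) a + w := projT2 (cid (line_decomposition v)).
exists phi; split.
- move=> c x y.
  have [wx [Wx Ex]] := phiP x; have [wy [Wy Ey]] := phiP y.
  have [w [Ww E]] := phiP (sc c x + y).
  apply: (line_coef_unique Ww (WS.2 _ _ _ Wx Wy)).
  by rewrite -E {1}Ex {1}Ey scDr scA scDl addrACA.
- move=> x Wx; have [w [Ww E]] := phiP x.
  by apply: (line_coef_unique Ww Wx); rewrite -E sc0 add0r.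
- have [w [Ww E]] := phiP a.
  by apply: (line_coef_unique Ww WS.1); rewrite -E sc1 addr0.
Qed.

End MaximalSubspace.

Lemma separating_functional :
  exists phi, [/\ functional phi, forall x, P x -> phi x = 0 & phi a = 1].
Proof.
have [W [WS PW Wa Wmax]] := maximal_avoiding.
have [phi [phiL phiW phia]] := maximal_functional WS PW Wa Wmax.
by exists phi; split => // x /PW /phiW.
Qed.

End SeparatingFunctional.

Section LinearMaps.

Variable C : comPzRingType.

Lemma lin0 (U V : lmodType C) (f : U -> V) : lin f -> f 0 = 0.
Proof.
move=> fL; have := fL 1 0 0; rewrite !scale1r addr0 => E.
by apply: (@addrI _ (f 0)); rewrite addr0 -E.
Qed.

Lemma linD (U V : lmodType C) (f : U -> V) : lin f -> forall x y, f (x + y) = f x + f y.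
Proof. by move=> fL x y; have := fL 1 x y; rewrite !scale1r. Qed.

Lemma linZ (U V : lmodType C) (f : U -> V) : lin f -> forall c x, f (c *: x) = c *: f x.
Proof. by move=> fL c x; have := fL c x 0; rewrite !addr0 (lin0 fL) addr0. Qed.

Lemma linN (U V : lmodType C) (f : U -> V) : lin f -> forall x, f (- x) = - f x.
Proof. by move=> fL x; rewrite -scaleN1r (linZ fL) scaleN1r. Qed.

Lemma linB (U V : lmodType C) (f : U -> V) : lin f -> forall x y, f (x - y) = f x - f y.
Proof. by move=> fL x y; rewrite (linD fL) (linN fL). Qed.

Lemma lin_sum (U V : lmodType C) (f : U -> V) : lin f ->
  forall (I : Type) (s : seq I) (F : I -> U), f (\sum_(i <- s) F i) = \sum_(i <- s) f (F i).
Proof.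
move=> fL I s F; elim: s => [|i s IH]; first by rewrite !big_nil (lin0 fL).
by rewrite !big_cons (linD fL) IH.
Qed.

Lemma lin_comp (U V W : lmodType C) (f : V -> W) (g : U -> V) :
  lin f -> lin g -> lin (fun x => f (g x)).
Proof. by move=> fL gL c x y; rewrite gL fL. Qed.

Lemma lin_scale (U V : lmodType C) (f : U -> V) (e : C) :
  lin f -> lin (fun x => e *: f x).
Proof. by move=> fL c x y; rewrite fL scalerDr !scalerA mulrC. Qed.

Lemma coef_map (U V : lmodType C) (g : U -> V) (s : seq U) k :
  g 0 = 0 -> coef (map g s) k = g (coef s k).
Proof. by move=> g0; rewrite /coef; elim: s k => [|u s IH] [|k] //=; rewrite nth_nil. Qed.

(* The substitution nu := lambda + mu is injective: a polynomial F(lambda, nu)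
   vanishing after substitution is zero.  This turns super-commutativity into
   [Psi_lambda(u)_nu u] = 0. *)
Lemma subst_sum_eq0 (N : lmodType C) (F : nat -> nat -> N) :
  (forall i j, subst_sum F i j = 0) -> forall p q, F p q = 0.
Proof.
move=> F0 p; elim/ltn_ind: p => p IH q.
have := F0 p q; rewrite /subst_sum big_ord_recl big1.
  by rewrite addr0 subn0 addn0 bin0 mulr1n.
move=> i _; rewrite IH ?mul0rn //=.
by rewrite /bump /= add1n subnS prednK ?subn_gt0 // leq_subr.
Qed.

Variables (N : lmodType C) (T : lcsa_data N).
Hypothesis lcsaT : is_lcsa T.

Lemma br_linl z k : lin (fun x => coef (br T x z) k).
Proof. by case: lcsaT => _ [_ [_ [_ [_ [_ [H _]]]]]] c x y; apply: H. Qed.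

Lemma br_linr x k : lin (fun y => coef (br T x y) k).
Proof. by case: lcsaT => _ [_ [_ [_ [_ [_ [_ [H _]]]]]]] c y z; apply: H. Qed.

Lemma par_lin b : lin (par T b).
Proof. by case: lcsaT. Qed.

Lemma par_homog b x : homog T b (par T b x).
Proof. by case: lcsaT => _ [H _]; apply: H. Qed.

End LinearMaps.

Section TensorProduct.

Variables (K : fieldType) (L : lmodType K) (A : comPzRingType).
Variables (iota : {rmorphism K -> A}) (M : lmodType K) (t : L -> A -> M).
Hypothesis tensorM : is_tensor_product iota t.

Let ascale (c : K) (a : A) : A := iota c * a.

Lemma tensor_linl a : lin (t^~ a).
Proof. by case: tensorM => -[H _] _ c x y; apply: H. Qed.

Lemma tensor_linr c x a b : t x (iota c * a + b) = c *: t x a + t x b.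
Proof. by case: tensorM => -[_ H] _; apply: H. Qed.

Lemma tensorDr x a b : t x (a + b) = t x a + t x b.
Proof. by have := tensor_linr 1 x a b; rewrite rmorph1 mul1r scale1r. Qed.

Lemma tensor0r x : t x 0 = 0.
Proof. by apply: (@addrI _ (t x 0)); rewrite -tensorDr !addr0. Qed.

Lemma tensorZr c x a : t x (iota c * a) = c *: t x a.
Proof. by have := tensor_linr c x a 0; rewrite addr0 tensor0r addr0. Qed.

Lemma tensor_ext (W : lmodType K) (h1 h2 : M -> W) :
  lin h1 -> lin h2 -> (forall x a, h1 (t x a) = h2 (t x a)) -> forall m, h1 m = h2 m.
Proof.
move=> h1L h2L E m.
have bil : bilin iota (fun x a => h1 (t x a)).
  by split=> [c x y a|c x a b]; rewrite ?tensor_linr ?(tensor_linl a) h1L.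
have [g [_ [_ g_uniq]]] := tensorM.2 W _ bil.
by rewrite (g_uniq h1 h1L (fun _ _ => erefl)) (g_uniq h2 h2L (fun x a => esym (E x a))).
Qed.

Lemma tensor_ext2 (W : lmodType K) (F G : M -> M -> W) :
  (forall n, lin (F^~ n)) -> (forall n, lin (G^~ n)) ->
  (forall m, lin (F m)) -> (forall m, lin (G m)) ->
  (forall x a y b, F (t x a) (t y b) = G (t x a) (t y b)) -> forall m n, F m n = G m n.
Proof.
move=> FL GL FR GR E m n; move: m; apply: tensor_ext => // x a.
by move: n; apply: tensor_ext => // y b; apply: E.
Qed.

Lemma tensor_lift (W : lmodType K) (f : L -> A -> W) :
  bilin iota f -> exists g : M -> W, lin g /\ forall x a, g (t x a) = f x a.
Proof. by move=> fB; have [g [gL [gt _]]] := tensorM.2 W _ fB; exists g. Qed.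

Definition tensor_sum (s : seq (L * A)) : M := \sum_(p <- s) t p.1 p.2.

(* Every element of L (x) A is a finite sum of pure tensors: otherwise a linear
   functional vanishing on these sums but not on m would contradict
   tensor_ext. *)
Lemma tensor_spanned m : exists s, m = tensor_sum s.
Proof.
apply: contrapT => nospan.
pose P m := exists s, m = tensor_sum s.
have P0 : P 0 by exists [::]; rewrite /tensor_sum big_nil.
have PC c x y : P x -> P y -> P (c *: x + y).
  move=> [sx ->] [sy ->]; exists ([seq (c *: p.1, p.2) | p <- sx] ++ sy).
  rewrite /tensor_sum big_cat big_map /= scaler_sumr; congr (_ + _).
  by apply: eq_bigr => p _; rewrite (linZ (tensor_linl _)).
have [phi [phiL phiP phim]] := separating_functional (sc := fun c (x : M) => c *: x)
  (@scalerDr _ _) (fun c e x => scalerDl x c e) (@scalerA _ _) (@scale1r _ _) (conj P0 PC) nospan.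
have zeroL : lin (fun _ : M => 0 : K^o) by move=> c x y; rewrite scaler0 addr0.
have : (1 : K) = 0.
  rewrite -phim; apply: (tensor_ext (phiL : lin (phi : M -> K^o)) zeroL) => x a.
  by apply: phiP; exists [:: (x, a)]; rewrite /tensor_sum big_seq1.
by move/eqP; rewrite oner_eq0.
Qed.

Definition contraction (g : M -> L) :=
  lin g /\ exists phi, functional ascale phi /\ forall x a, g (t x a) = phi a *: x.

Lemma contraction_of_functional phi : functional ascale phi ->
  exists g, contraction g /\ forall x a, g (t x a) = phi a *: x.
Proof.
move=> phiL; have fB : bilin iota (fun (x : L) a => phi a *: x).
  split=> [c x y a|c x a b]; first by rewrite scalerDr !scalerA mulrC.
  by rewrite (phiL c a b) scalerDl scalerA.
have [g [gL gt]] := tensor_lift fB.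
by exists g; split => //; split => //; exists phi.
Qed.

Lemma contraction_sum g phi : lin g -> (forall x a, g (t x a) = phi a *: x) ->
  forall s, g (tensor_sum s) = \sum_(p <- s) phi p.2 *: p.1.
Proof.
move=> gL gt s; rewrite /tensor_sum (lin_sum gL).
by apply: eq_bigr => p _; rewrite gt.
Qed.

Definition in_span (s : seq A) (a : A) :=
  exists cs : seq (K * A), all (fun q => q.2 \in s) cs /\ a = \sum_(q <- cs) iota q.1 * q.2.

Lemma span_functional s a : ~ in_span s a ->
  exists phi, [/\ functional ascale phi, forall b, b \in s -> phi b = 0 & phi a = 1].
Proof.
move=> nspan.
have spanS : subspace ascale (in_span s).
  split; first by exists [::]; rewrite big_nil.
  move=> c x y [cx [Hx ->]] [cy [Hy ->]].
  exists ([seq (c * q.1, q.2) | q <- cx] ++ cy); split.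
    by rewrite all_cat all_map Hy andbT.
  rewrite big_cat big_map /ascale mulr_sumr; congr (_ + _).
  by apply: eq_bigr => q _ /=; rewrite rmorphM mulrA.
have scDr c x y : ascale c (x + y) = ascale c x + ascale c y by rewrite /ascale mulrDr.
have scDl c e x : ascale (c + e) x = ascale c x + ascale e x by rewrite /ascale rmorphD mulrDl.
have scM c e x : ascale c (ascale e x) = ascale (c * e) x by rewrite /ascale rmorphM mulrA.
have sc1 x : ascale 1 x = x by rewrite /ascale rmorph1 mul1r.
have [phi [phiL phiS phia]] := separating_functional scDr scDl scM sc1 spanS nspan.
exists phi; split => // b sb; apply: phiS.
by exists [:: (1, b)]; rewrite /= sb big_seq1 /= rmorph1 mul1r.
Qed.

Lemma tensor_sum_absorb r y b : b \in map snd r ->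
  exists r', map snd r' = map snd r /\ tensor_sum r + t y b = tensor_sum r'.
Proof.
elim: r => [|p r IH] //=; rewrite in_cons => /orP [/eqP ->|br].
  exists ((p.1 + y, p.2) :: r); split => //.
  by rewrite /tensor_sum !big_cons /= addrAC (linD (tensor_linl _)).
have [r' [E1 E2]] := IH br; exists (p :: r'); split; first by rewrite /= E1.
by rewrite /tensor_sum !big_cons -/(tensor_sum r) -/(tensor_sum r') -addrA E2.
Qed.

Lemma tensor_sum_merge r x a : in_span (map snd r) a ->
  exists r', map snd r' = map snd r /\ tensor_sum r + t x a = tensor_sum r'.
Proof.
move=> [cs [csr ->]]; elim: cs csr => [|q cs IH] /=.
  by move=> _; exists r; rewrite big_nil tensor0r addr0.
move=> /andP [qr csr]; have [r1 [E1 E2]] := IH csr.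
have qr1 : q.2 \in map snd r1 by rewrite E1.
have [r' [F1 F2]] := tensor_sum_absorb (q.1 *: x) qr1.
exists r'; split; first by rewrite F1 E1.
by rewrite big_cons tensorDr tensorZr -(linZ (tensor_linl _)) addrCA E2 addrC F2.
Qed.

(* Contractions separate sums of tensors, by induction on their length: either
   the first second component is in the span of the others and merges into
   them, or a contraction singles out the first first component, which must
   then vanish. *)
Lemma separation_sum n s : (size s <= n)%N ->
  (forall g, contraction g -> g (tensor_sum s) = 0) -> tensor_sum s = 0.
Proof.
elim: n s => [|n IH] [|p r] //= sz; try by rewrite /tensor_sum big_nil.
have sumE : tensor_sum (p :: r) = t p.1 p.2 + tensor_sum r by rewrite /tensor_sum big_cons.
have [[cs spanp]|nspan] := pselect (in_span (map snd r) p.2).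
  have [r' [E1 E2]] := tensor_sum_merge p.1 (ex_intro _ cs spanp).
  rewrite sumE addrC E2 => g0; apply: IH => //.
  by rewrite -(size_map snd) E1 size_map.
have [phi [phiL phir phip]] := span_functional nspan.
have [g [gC gt]] := contraction_of_functional phiL.
move=> g0; have := g0 g gC.
rewrite sumE (linD gC.1) gt (contraction_sum gC.1 gt) phip scale1r big1_seq ?addr0.
  move=> p1; rewrite p1 (lin0 (tensor_linl _)) add0r; apply: IH => // h hC.
  by have := g0 h hC; rewrite sumE p1 (lin0 (tensor_linl _)) add0r.
by move=> q /andP [_ qr]; rewrite phir ?scale0r // (map_f snd qr).
Qed.

Lemma separation m : (forall g, contraction g -> g m = 0) -> m = 0.
Proof. by have [s ->] := tensor_spanned m; apply: separation_sum. Qed.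

End TensorProduct.

Section CurrentAlgebra.

Variables (K : fieldType) (L : lmodType K) (S : lcsa_data L).
Variables (A : comPzRingType) (iota : {rmorphism K -> A}).
Variables (M : lmodType K) (SM : lcsa_data M) (t : L -> A -> M).
Hypotheses (lcsaL : is_lcsa S) (currentM : is_current S iota SM t).

Let tensorM : is_tensor_product iota t := currentM.1.
Let lcsaM : is_lcsa SM := currentM.2.1.

Local Notation bM m n k := (coef (br SM m n) k).
Local Notation bL x y k := (coef (br S x y) k).
Local Notation contr := (contraction iota t).

Lemma br_tensor x y a b k : bM (t x a) (t y b) k = t (bL x y k) (a * b).
Proof. by case: currentM => _ [_ [_ [_ H]]]; apply: H. Qed.

Lemma par_tensor b x a : par SM b (t x a) = t (par S b x) a.
Proof. by case: currentM => _ [_ [H _]]; apply: H. Qed.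

Lemma mul_by_ex a : exists g : M -> M, lin g /\ forall x c, g (t x c) = t x (c * a).
Proof.
apply: (tensor_lift tensorM); split => [c x y b|c x b e]; first by rewrite (tensor_linl tensorM).
by rewrite mulrDl -mulrA (tensor_linr tensorM).
Qed.

Definition mul_by a : M -> M := projT1 (cid (mul_by_ex a)).

Lemma mul_by_lin a : lin (mul_by a).
Proof. exact: (projT2 (cid (mul_by_ex a))).1. Qed.

Lemma mul_by_tensor a x c : mul_by a (t x c) = t x (c * a).
Proof. exact: (projT2 (cid (mul_by_ex a))).2. Qed.

Lemma tensor_mul_by x a : t x a = mul_by a (t x 1).
Proof. by rewrite mul_by_tensor mul1r. Qed.

Lemma mul_byM a b m : mul_by b (mul_by a m) = mul_by (a * b) m.
Proof.
move: m; apply: (tensor_ext tensorM).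
- exact: (lin_comp (mul_by_lin b) (mul_by_lin a)).
- exact: mul_by_lin.
- by move=> x c; rewrite !mul_by_tensor mulrA.
Qed.

Lemma br_mul_byl a m n k : bM (mul_by a m) n k = mul_by a (bM m n k).
Proof.
move: m; apply: (tensor_ext tensorM).
- exact: (lin_comp (br_linl lcsaM n k) (mul_by_lin a)).
- exact: (lin_comp (mul_by_lin a) (br_linl lcsaM n k)).
move=> x c; rewrite mul_by_tensor; move: n; apply: (tensor_ext tensorM).
- exact: br_linr lcsaM _ k.
- exact: (lin_comp (mul_by_lin a) (br_linr lcsaM _ k)).
by move=> y e; rewrite !br_tensor mul_by_tensor mulrAC.
Qed.

Lemma br_mul_byr a m n k : bM m (mul_by a n) k = mul_by a (bM m n k).
Proof.
move: n; apply: (tensor_ext tensorM).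
- exact: (lin_comp (br_linr lcsaM m k) (mul_by_lin a)).
- exact: (lin_comp (mul_by_lin a) (br_linr lcsaM m k)).
move=> y e; rewrite mul_by_tensor; move: m; apply: (tensor_ext tensorM).
- exact: br_linl lcsaM _ k.
- exact: (lin_comp (mul_by_lin a) (br_linl lcsaM _ k)).
by move=> x c; rewrite !br_tensor mul_by_tensor mulrA.
Qed.

Lemma contraction_brl g : contr g -> forall m y k, bL (g m) y k = g (bM m (t y 1) k).
Proof.
move=> [gL [phi [_ gt]]] m y k; move: m; apply: (tensor_ext tensorM).
- exact: (lin_comp (br_linl lcsaL y k) gL).
- exact: (lin_comp gL (br_linl lcsaM _ k)).
by move=> x c; rewrite br_tensor !gt mulr1 (linZ (br_linl lcsaL y k)).
Qed.

Lemma contraction_brr g : contr g -> forall n y k, bL y (g n) k = g (bM (t y 1) n k).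
Proof.
move=> [gL [phi [_ gt]]] n y k; move: n; apply: (tensor_ext tensorM).
- exact: (lin_comp (br_linr lcsaL y k) gL).
- exact: (lin_comp gL (br_linr lcsaM _ k)).
by move=> x c; rewrite br_tensor !gt mul1r (linZ (br_linr lcsaL y k)).
Qed.

Lemma contraction_par g b : contr g -> forall m, g (par SM b m) = par S b (g m).
Proof.
move=> [gL [phi [_ gt]]]; apply: (tensor_ext tensorM).
- exact: (lin_comp gL (par_lin lcsaM b)).
- exact: (lin_comp (par_lin lcsaL b) gL).
by move=> x c; rewrite par_tensor !gt (linZ (par_lin lcsaL b)).
Qed.

(* Z_L(L) = 0 (a consequence of Z_L(L') = 0) propagates to the current
   algebra: an element centralizing L (x) 1 is zero, since each contraction
   maps it into Z_L(L). *)
Lemma centralizer_tensor_one m : trivial_centralizer_of_derived S ->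
  (forall y k, bM m (t y 1) k = 0) -> m = 0.
Proof.
move=> Z0 mZ; apply: (separation tensorM) => g gC; apply: Z0 => y _ k.
by rewrite (contraction_brl gC) mZ (lin0 gC.1).
Qed.

Section SuperCommutingMap.

Hypothesis Z0 : trivial_centralizer_of_derived S.
Hypothesis centralL : forall (d : bool) (Phi : L -> seq L),
  lin_map Phi -> has_degree S d Phi -> super_commuting S Phi -> in_centroid S d Phi.

Variables (d : bool) (Psi : M -> seq M).
Hypotheses (PsiL : lin_map Psi) (Psid : has_degree SM d Psi).
Hypothesis Psis : super_commuting SM Psi.

Local Notation psi m p := (coef (Psi m) p).

Lemma psi_lin p : lin (fun m => psi m p).
Proof. by move=> c u v; apply: PsiL. Qed.

Lemma super_commuting_coef u p k : bM (psi u p) u k = 0.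
Proof. exact: (subst_sum_eq0 (Psis u) p k). Qed.

(* polarization of super-commutativity *)
Lemma super_commuting_antisym m n p k : bM (psi m p) n k = - bM (psi n p) m k.
Proof.
have := super_commuting_coef (m + n) p k.
rewrite (linD (psi_lin p)) (linD (br_linl lcsaM _ k)) !(linD (br_linr lcsaM _ k)).
by rewrite !super_commuting_coef add0r addr0 => /eqP; rewrite addr_eq0 => /eqP.
Qed.

(* Psi commutes with the multiplication operators: Psi(x (x) a) = Psi(x (x) 1) a.
   Both sides have the same bracket with every t y 1, by antisymmetry and
   because mul_by is centroidal. *)
Lemma psi_tensor a x p : psi (t x a) p = mul_by a (psi (t x 1) p).
Proof.
apply/eqP; rewrite -subr_eq0; apply/eqP; apply: centralizer_tensor_one => // y k.
rewrite (linB (br_linl lcsaM _ k)) super_commuting_antisym [t x a]tensor_mul_by.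
by rewrite br_mul_byr super_commuting_antisym (linN (mul_by_lin a)) opprK br_mul_byl subrr.
Qed.

(* For a contraction g, x |-> g (Psi (x (x) 1)) is a super-commuting map on L
   of degree d, hence in Cent(L) by hypothesis. *)
Lemma contracted_centroid g : contr g -> in_centroid S d (fun x => map g (Psi (t x 1))).
Proof.
move=> gC; have g0 := lin0 gC.1; apply: centralL.
- by move=> c u v k; rewrite !coef_map // (tensor_linl tensorM) PsiL gC.1.
- move=> b x k xb; rewrite coef_map // /homog -(contraction_par _ gC).
  have xb1 : homog SM b (t x 1) by rewrite /homog par_tensor xb.
  by rewrite (Psid k xb1).
- move=> u i j; rewrite /subst_sum big1 // => k _.
  by rewrite coef_map // (contraction_brl gC) super_commuting_coef g0 mul0rn.
Qed.

(* Separating over all contractions, the centroid identities hold for Psi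
   on the subalgebra L (x) 1. *)
Lemma psi_br_one_right a b x y i j : homog S a x -> homog S b y ->
  psi (t (bL x y j) 1) i = bM (psi (t x 1) i) (t y 1) j.
Proof.
move=> xa yb; apply/eqP; rewrite -subr_eq0; apply/eqP.
apply: (separation tensorM) => g gC; have g0 := lin0 gC.1.
have [_ [_ gcent]] := contracted_centroid gC.
have [_] := gcent _ _ _ _ i j xa yb; rewrite !coef_map // => E.
by rewrite (linB gC.1) -(contraction_brl gC) E subrr.
Qed.

Lemma psi_br_one_left a b x y i j : homog S a x -> homog S b y ->
  psi (t (bL x y j) 1) i = sgn _ (a && d) *: bM (t x 1) (psi (t y 1) i) j.
Proof.
move=> xa yb; apply/eqP; rewrite -subr_eq0; apply/eqP.
apply: (separation tensorM) => g gC; have g0 := lin0 gC.1.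
have [_ [_ gcent]] := contracted_centroid gC.
have [E _] := gcent _ _ _ _ i j xa yb; move: E; rewrite !coef_map // => E.
by rewrite (linB gC.1) (linZ gC.1) -(contraction_brr gC) E subrr.
Qed.

(* With psi_tensor, the identities extend to all pure tensors. *)
Lemma psi_br_tensor_right a' b' x y a b i j : homog S a' x -> homog S b' y ->
  psi (bM (t x a) (t y b) j) i = bM (psi (t x a) i) (t y b) j.
Proof.
move=> xa yb; rewrite br_tensor psi_tensor (psi_br_one_right _ _ xa yb).
by rewrite (psi_tensor a x i) [t y b]tensor_mul_by br_mul_byr br_mul_byl mul_byM.
Qed.

Lemma psi_br_tensor_left a' b' x y a b i j : homog S a' x -> homog S b' y ->
  psi (bM (t x a) (t y b) j) i = sgn _ (a' && d) *: bM (t x a) (psi (t y b) i) j.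
Proof.
move=> xa yb; rewrite br_tensor psi_tensor (psi_br_one_left _ _ xa yb).
rewrite [t x a]tensor_mul_by (psi_tensor b y i) br_mul_byl br_mul_byr mul_byM.
by rewrite (linZ (mul_by_lin _)) mulrC.
Qed.

Lemma psi_br_left a b m n i j :
  psi (bM (par SM a m) (par SM b n) j) i =
  sgn _ (a && d) *: bM (par SM a m) (psi (par SM b n) i) j.
Proof.
move: m n; apply: (tensor_ext2 tensorM) => [n|n|m|m|x c y e].
- exact: lin_comp (psi_lin i) (lin_comp (br_linl lcsaM _ j) (par_lin lcsaM a)).
- exact: lin_scale (lin_comp (br_linl lcsaM _ j) (par_lin lcsaM a)).
- exact: lin_comp (psi_lin i) (lin_comp (br_linr lcsaM _ j) (par_lin lcsaM b)).
- exact: lin_scale (lin_comp (br_linr lcsaM _ j) (lin_comp (psi_lin i) (par_lin lcsaM b))).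
by rewrite !par_tensor; apply: psi_br_tensor_left; apply: par_homog.
Qed.

Lemma psi_br_right a b m n i j :
  psi (bM (par SM a m) (par SM b n) j) i = bM (psi (par SM a m) i) (par SM b n) j.
Proof.
move: m n; apply: (tensor_ext2 tensorM) => [n|n|m|m|x c y e].
- exact: lin_comp (psi_lin i) (lin_comp (br_linl lcsaM _ j) (par_lin lcsaM a)).
- exact: lin_comp (br_linl lcsaM _ j) (lin_comp (psi_lin i) (par_lin lcsaM a)).
- exact: lin_comp (psi_lin i) (lin_comp (br_linr lcsaM _ j) (par_lin lcsaM b)).
- exact: lin_comp (br_linr lcsaM _ j) (par_lin lcsaM b).
by rewrite !par_tensor; apply: psi_br_tensor_right; apply: par_homog.
Qed.

Lemma psi_in_centroid : in_centroid SM d Psi.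
Proof.
split; [exact: PsiL | split; [exact: Psid|]] => a b m n i j <- <-.
by split; [apply: psi_br_left | apply: psi_br_right].
Qed.

End SuperCommutingMap.

End CurrentAlgebra.

Theorem mainTheorem9 (R : realType)
    (L : lmodType R[i]) (S : lcsa_data L)
    (A : comPzRingType) (iota : {rmorphism R[i] -> A})
    (M : lmodType R[i]) (SM : lcsa_data M) (t : L -> A -> M) :
  is_lcsa S ->
  trivial_centralizer_of_derived S ->
  is_current S iota SM t ->
  (forall (d : bool) (Psi : L -> seq L),
      lin_map Psi -> has_degree S d Psi -> super_commuting S Psi ->
      in_centroid S d Psi) ->
  forall (d : bool) (Psi : M -> seq M),
    lin_map Psi -> has_degree SM d Psi -> super_commuting SM Psi ->
    in_centroid SM d Psi.
Proof.
move=> lcsaL Z0 currentM centralL d Psi PsiL Psid Psis.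

exact: (psi_in_centroid (K := R[i]) lcsaL currentM Z0 centralL PsiL Psid Psis).
Qed.
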